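(* Let $\mathcal H=\{h_i:i\in\mathbb N\}$ be the class of singletons over $\mathbb N$, where $h_i(x)=1$ if $x=i$ and $h_i(x)=-1$ otherwise. There are two maps $F_a,F_b:\{0,1\}^n\to([n]\times\{\pm1\})^n$ such that for all $x,y\in\{0,1\}^n$, with $S=(F_a(x),F_b(y))$ (the concatenation, a sample of size $2n$) and identifying $x,y$ with subsets of $[n]$: (1) if $x\cap y=\emptyset$ then $L_S(f)\ge\frac{|x|+|y|}{2n}$ for every $f:[n]\to\{\pm1\}$; (2) if $x\cap y\ne\emptyset$ then $L_S(h)\le\frac{|x|+|y|-2}{2n}$ for some $h\in\mathcal H$.
   Context: For a sample $S$ (finite sequence of pairs $(x,y)$ with $y\in\{\pm1\}$) and hypothesis $h$, $L_S(h)=\frac{1}{|S|}\sum_{(x,y)\in S}1[h(x)\ne y]$. *)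

From mathcomp Require Import all_boot all_order all_algebra.
Set Implicit Arguments. Unset Strict Implicit. Unset Printing Implicit Defensive.
Import Order.TTheory GRing.Theory Num.Theory.
Local Open Scope ring_scope.

(* Labels in {+1,-1} are encoded as bool: true = +1, false = -1. *)
Notation pm1 := bool (only parsing).

Definition emp_loss (X : Type) (S : seq (X * pm1)) (h : X -> pm1) : rat :=
  (count (fun p => h p.1 != p.2) S)%:R / (size S)%:R.

Definition singleton_h (n : nat) (i : nat) : 'I_n -> pm1 :=
  fun x => (nat_of_ord x == i)%N.

Definition bits_set (n : nat) (x : {ffun 'I_n -> bool}) : {set 'I_n} :=
  [set i | x i].

From mathcomp Require Import all_boot all_order all_algebra.
Set Implicit Arguments.
Unset Strict Implicit.
Unset Printing Implicit Defensive.
Import Order.TTheory GRing.Theory Num.Theory.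
Local Open Scope ring_scope.

(* Encode x as the n labelled points (i, x i); on S = (F x, F y) the number of
   mistakes of f is then d(f, x) + d(f, y), with d the Hamming distance.  If X
   and Y are disjoint, d(x, y) = |X| + |Y| and the triangle inequality gives
   (1).  If j is in X and Y, the singleton h_j is at distance |X| - 1 from x and
   |Y| - 1 from y, which gives (2). *)

Section Hamming.

Variable T : finType.

Definition hamming (f g : T -> bool) : nat := #|[set i | f i != g i]|.

Lemma hamming_triangle (f x y : T -> bool) :
  (hamming x y <= hamming f x + hamming f y)%N.
Proof.
apply: leq_trans (leq_card_setU _ _); apply: subset_leq_card.
by apply/subsetP => i; rewrite !inE; case: (f i) (x i) (y i) => [] [] [].
Qed.

Lemma hamming_disjoint (x y : T -> bool) :
  [set i | x i] :&: [set i | y i] = set0 ->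
  hamming x y = (#|[set i | x i]| + #|[set i | y i]|)%N.
Proof.
move=> XY0; rewrite -cardsUI XY0 cards0 addn0 /hamming.
apply: eq_card => i; have := congr1 (fun A : {set T} => i \in A) XY0.
by rewrite !inE; case: (x i); case: (y i).
Qed.

Lemma hamming_indicator (j : T) (x : T -> bool) :
  x j -> (hamming (fun i => i == j) x).+1 = #|[set i | x i]|.
Proof.
move=> xj; rewrite (cardsD1 j) in_set xj /hamming; congr (_.+1).
apply: eq_card => i; rewrite !inE /=.
by case: (eqVneq i j) => [->|]; rewrite ?xj //; case: (x i).
Qed.

End Hamming.

Lemma count_enumT (T : finType) (a : pred T) : count a (enum T) = #|a|.
Proof. by rewrite cardE -size_filter enumT. Qed.

Definition label_sample {n} (x : {ffun 'I_n -> bool}) : n.-tuple ('I_n * bool) :=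
  map_tuple (fun i => (i, x i)) (ord_tuple n).

Lemma emp_loss_label_samples n (x y : {ffun 'I_n -> bool}) (f : 'I_n -> bool) :
  emp_loss (tval (label_sample x) ++ tval (label_sample y))%SEQ f =
  (hamming f x + hamming f y)%:R / (2 * n)%:R.
Proof.
rewrite /emp_loss size_cat !size_tuple addnn -mul2n count_cat /= !count_map.
by rewrite -enumT !count_enumT /hamming !cardsE.
Qed.

Theorem lemma3 (n : nat) :
  exists Fa Fb : {ffun 'I_n -> bool} -> n.-tuple ('I_n * bool),
    forall x y : {ffun 'I_n -> bool},
      let S := (tval (Fa x) ++ tval (Fb y))%SEQ in
      let X := bits_set x in
      let Y := bits_set y in
      ((X :&: Y = set0)%SET ->
         forall f : 'I_n -> bool,
           ((#|X| + #|Y|)%:R / (2 * n)%:R <= emp_loss S f :> rat)) /\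
      ((X :&: Y != set0)%SET ->
         exists i : nat,
           (emp_loss S (@singleton_h n i) <= ((#|X| + #|Y|)%:R - 2) / (2 * n)%:R :> rat)).
Proof.
exists label_sample, label_sample => x y S X Y.
have inv2n_ge0 : 0 <= (2 * n)%:R^-1 :> rat by rewrite invr_ge0 ler0n.
split=> [XY0 f | /set0Pn[j]].
- rewrite /S emp_loss_label_samples; apply: (ler_wpM2r inv2n_ge0).
  by rewrite ler_nat -hamming_disjoint ?hamming_triangle.
- rewrite !inE => /andP[xj yj]; exists j.
  have -> : @singleton_h n j = (fun i => i == j) by [].
  rewrite /S emp_loss_label_samples; apply: (ler_wpM2r inv2n_ge0).
  rewrite /X /Y /bits_set -(hamming_indicator xj) -(hamming_indicator yj).
  by rewrite addSn addnS -addn2 !natrD addrK.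
Qed.
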